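(* Let $q$ be a prime power, $m$ a positive integer with $\gcd(m,q)=1$, $\lambda\in\mathbb{F}_q^*$, and $R_\lambda=\mathbb{F}_q[x]/\langle x^m-\lambda\rangle$. Let $C$ and $D$ be $\lambda$-quasi-twisted codes over $\mathbb{F}_q$ of length $2m$ and index $2$ (viewed as $R_\lambda$-submodules of $R_\lambda^2$), with $C$ generated by $(g_{11}(x),g_{12}(x))$ and $(0,g_{22}(x))$, and $D$ generated by $(f_{11}(x),f_{12}(x))$ and $(0,f_{22}(x))$, where $g_{11}(x)\mid x^m-\lambda$, $g_{22}(x)\mid x^m-\lambda$, $\deg g_{12}(x)<\deg g_{22}(x)$, $g_{11}(x)g_{22}(x)\mid (x^m-\lambda)g_{12}(x)$, and likewise $f_{11}(x)\mid x^m-\lambda$, $f_{22}(x)\mid x^m-\lambda$, $\deg f_{12}(x)<\deg f_{22}(x)$, $f_{11}(x)f_{22}(x)\mid (x^m-\lambda)f_{12}(x)$. Let $g(x)=\gcd(g_{11}(x),g_{22}(x))$, $f(x)=\gcd(f_{11}(x),f_{22}(x))$, and write $g_{22}(x)=g(x)g_{22}'(x)$, $f_{22}(x)=f(x)f_{22}'(x)$. Then $(C,D)$ is a linear complementary pair of codes if and only if: (I) $\gcd(f_{11}(x),g_{11}(x))=1$; (II) $g(x)=\dfrac{x^m-\lambda}{\mathrm{lcm}(f_{11}(x),f_{22}(x))}$; (III) $f(x)=\dfrac{x^m-\lambda}{\mathrm{lcm}(g_{11}(x),g_{22}(x))}$; (IV) $\gcd\big(g_{22}'(x),f_{22}'(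x),\,g_{11}(x)f_{12}(x)-g_{12}(x)f_{11}(x)\big)=1$.
   Context: A pair $(C,D)$ of $\mathbb{F}_q$-linear codes of the same length $n$ is a linear complementary pair (LCP) of codes if $C\cap D=\{0\}$ and $C+D=\mathbb{F}_q^n$. For $\lambda\in\mathbb{F}_q^*$, $T_\lambda(x_0,\dots,x_{n-1})=(\lambda x_{n-1},x_0,\dots,x_{n-2})$; a linear code $C\subseteq\mathbb{F}_q^{2m}$ is $\lambda$-quasi-twisted of index $2$ if $T_\lambda^2(C)\subseteq C$, and it is identified with an $R_\lambda$-submodule of $R_\lambda^2$ via $(c_{0,0},c_{0,1},\dots,c_{m-1,0},c_{m-1,1})\mapsto(c_0(x),c_1(x))$, $c_j(x)=\sum_i c_{i,j}x^i$. gcd and lcm are monic. *)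

From HB Require Import structures.
From mathcomp Require Import all_boot all_order all_algebra all_field.
Set Implicit Arguments. Unset Strict Implicit. Unset Printing Implicit Defensive.
Import GRing.Theory.
Local Open Scope ring_scope.

Section QT.
Variable F : fieldType.

Definition monicize (p : {poly F}) : {poly F} := (lead_coef p)^-1 *: p.
Definition mgcd (p q : {poly F}) : {poly F} := monicize (gcdp p q).
Definition mlcm (p q : {poly F}) : {poly F} := monicize ((p * q) %/ gcdp p q).

Definition xml (m : nat) (lam : F) : {poly F} := 'X^m - lam%:P.

(* the vector (c_{0,0}, c_{0,1}, ..., c_{m-1,0}, c_{m-1,1}) of F^{2m}
   associated with (c_0(x), c_1(x)) *)
Definition qt_vec (m : nat) (c0 c1 : {poly F}) : 'rV[F]_(2 * m) :=
  \row_(i < 2 * m) (if odd i then c1 else c0)`_(i./2).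

(* the lambda-quasi-twisted code of length 2m, index 2, generated as an
   R_lambda-submodule of R_lambda^2 by (a11, a12) and (0, a22) *)
Definition qt_code (m : nat) (lam : F) (a11 a12 a22 : {poly F})
  (v : 'rV[F]_(2 * m)) : Prop :=
  exists a b : {poly F},
    v = qt_vec m ((a * a11) %% xml m lam) ((a * a12 + b * a22) %% xml m lam).

Definition LCP (n : nat) (C D : 'rV[F]_n -> Prop) : Prop :=
  (forall v, C v -> D v -> v = 0) /\
  (forall v, exists c d, C c /\ D d /\ v = c + d).
End QT.
Arguments qt_code {F} m lam a11 a12 a22 v.
Arguments qt_vec {F} m c0 c1.

From HB Require Import structures.
From mathcomp Require Import all_boot all_order all_algebra all_field.
From mathcomp Require Import ring.
From Stdlib Require Import Classical.
Import GRing.Theory.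
Set Implicit Arguments.
Unset Strict Implicit.
Unset Printing Implicit Defensive.

Local Open Scope ring_scope.

(* As m is invertible in F and lam != 0, N = x^m - lam is squarefree, so
   divisibility by N can be tested one irreducible factor p of N at a time,
   and a monic divisor of N is determined by the irreducible factors it has.
   Modulo p, the codes C and D become subspaces C_p and D_p of the plane over
   the field F[x]/(p): C_p is zero if p divides g11 and g22, the whole plane
   if p divides neither, and otherwise the line spanned by (0, g22) or by
   (g11, g12).  So (C, D) is an LCP iff C_p and D_p are complementary for
   every p, and (I)-(IV) say exactly this for all p at once: (I) forbids C_p
   and D_p to lie both on the line through (0, 1), (II) and (III) pair zero
   with full spaces, and (IV) asks the lines spanned by (g11, g12) and
   (f11, f12) to be distinct. *)

Lemma natr_neq0_coprime_card (F : finFieldType) (m : nat) :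
  coprime m #|F| -> m%:R != 0 :> F.
Proof.
move=> co_mF; have [p p_pr charFp] := finPcharP F.
have p_dvd_F : (p %| #|F|)%N.
  have cardF : #|F| = (p ^ logn p #|F|)%N := card_pprimeChar charFp.
  have : (0 < logn p #|F|)%N.
    by rewrite lt0n; apply: contraTneq (finNzRing_gt1 F) => e; rewrite cardF e.
  by rewrite logn_gt0 mem_primes => /and3P[].
rewrite -(dvdn_pcharf charFp); apply: contraL co_mF => p_dvd_m.
by apply/negP => /(coprime_dvdl p_dvd_m); rewrite prime_coprime ?p_dvd_F.
Qed.

Lemma separable_XnsubC (F : fieldType) (m : nat) (lam : F) :
  m%:R != 0 :> F -> lam != 0 -> separable_poly ('X^m - lam%:P).
Proof.
case: m => [/eqP // | n nz_n] lam0; rewrite unlock linearB /= derivC subr0.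
rewrite derivXn -scaler_nat coprimepZr // exprS coprimep_sym.
by rewrite coprimep_addl_mul -polyCN -alg_polyC coprimepZr ?oppr_eq0 ?coprimep1.
Qed.

Section IrreducibleDivisors.
Variable F : fieldType.
Implicit Types a b d p u w : {poly F}.

Lemma irredp_ndvd1 p : irreducible_poly p -> ~~ (p %| 1).
Proof. by case=> p_gt1 _; rewrite dvdp1 neq_ltn p_gt1 orbT. Qed.

Lemma irredp_dvd_mul p a b :
  irreducible_poly p -> (p %| a * b) = (p %| a) || (p %| b).
Proof.
move=> irr_p; apply/idP/idP; last first.
  by case/orP=> h; [exact: dvdp_mulr | exact: dvdp_mull].
have [//|pNa] := boolP (p %| a).
by rewrite Gauss_dvdpr ?irreducible_poly_coprime // => ->; rewrite orbT.
Qed.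

Lemma irredp_dvd_exists d :
  (1 < size d)%N -> exists2 p, irreducible_poly p & p %| d.
Proof.
move: {2}(size d) (leqnn (size d)) => n; elim: n d => [|n IHn] d.
  by rewrite leqn0 => /eqP->.
move=> le_d_n d_gt1; have [irr_d|red_d] := classic (irreducible_poly d).
  by exists d.
have [q [q_neq1 q_dvd_d qNd]] :
    exists q : {poly F}, [/\ size q != 1%N, q %| d & ~~ (q %= d)].
  apply: NNPP => none; apply: red_d; split => // q q_neq1 q_dvd_d.
  by apply/negPn/negP => qNd; apply: none; exists q.
have d_neq0 : d != 0 by rewrite -size_poly_gt0 ltnW.
have q_gt1 : (1 < size q)%N.
  by rewrite ltn_neqAle eq_sym q_neq1 size_poly_gt0 (dvdpN0 q_dvd_d).
have lt_q_d : (size q < size d)%N.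
  by rewrite ltn_neqAle dvdp_size_eqp // qNd dvdp_leq.
have [p irr_p p_dvd_q] := IHn q (leq_trans lt_q_d le_d_n) q_gt1.
by exists p => //; apply: dvdp_trans q_dvd_d.
Qed.

Lemma dvdp_congr d u w : d %| u - w -> (d %| u) = (d %| w).
Proof. by move=> d_dvd; rewrite -[u](subrK w) dvdp_addr. Qed.

Lemma coprimep_irredP a b : a != 0 ->
  coprimep a b <-> (forall p, irreducible_poly p -> p %| a -> ~~ (p %| b)).
Proof.
move=> a_neq0; split=> [co_ab p irr_p p_dvd_a | no_common].
  apply/negP => p_dvd_b; have := irredp_ndvd1 irr_p.
  have gcd1 : gcdp a b %= 1 by rewrite gcdp_eqp1.
  by rewrite -(eqp_dvdr _ gcd1) dvdp_gcd p_dvd_a p_dvd_b.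
rewrite /coprimep eqn_leq size_poly_gt0 gcdp_eq0 negb_and a_neq0 andbT leqNgt.
apply/negP => /irredp_dvd_exists[p irr_p].
by rewrite dvdp_gcd => /andP[/(no_common p irr_p)/negPf->].
Qed.
End IrreducibleDivisors.

Section MonicGcdLcm.
Variable F : fieldType.
Implicit Types a b c d p : {poly F}.

Lemma monicize_eqp a : monicize a %= a.
Proof.
have [-> | a_neq0] := eqVneq a 0; first by rewrite /monicize scaler0 eqpxx.
by rewrite eqp_scale // invr_eq0 lead_coef_eq0.
Qed.

Lemma monicize_eq0 a : (monicize a == 0) = (a == 0).
Proof. by rewrite scaler_eq0 invr_eq0 lead_coef_eq0 orbb. Qed.

Lemma monicize_monic a : a != 0 -> monicize a \is monic.
Proof. by move=> a_neq0; rewrite monicE lead_coefZ mulVf ?lead_coef_eq0. Qed.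

Lemma mgcd_eq1 a b : mgcd a b = 1 <-> coprimep a b.
Proof.
rewrite /mgcd -gcdp_eqp1 -(eqp_ltrans (monicize_eqp _)).
split=> [-> | g1]; first exact: eqpxx.
have gcd_neq0 : gcdp a b != 0.
  by apply: contraTneq g1 => ->; rewrite /monicize scaler0 eqp01.
by apply/eqP; rewrite -eqp_monic ?monic1 ?monicize_monic.
Qed.

Lemma dvdp_mgcd d a b : (d %| mgcd a b) = (d %| a) && (d %| b).
Proof. by rewrite (eqp_dvdr _ (monicize_eqp _)) dvdp_gcd. Qed.

Lemma mgcd_dvdl a b : mgcd a b %| a.
Proof. by rewrite (eqp_dvdl _ (monicize_eqp _)) dvdp_gcdl. Qed.

Lemma mgcd_dvdr a b : mgcd a b %| b.
Proof. by rewrite (eqp_dvdl _ (monicize_eqp _)) dvdp_gcdr. Qed.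

Lemma mlcm_dvdp a b c : a %| c -> b %| c -> mlcm a b %| c.
Proof.
move=> a_dvd_c /dvdpP[k c_eq]; rewrite c_eq in a_dvd_c *.
rewrite /mlcm (eqp_dvdl _ (monicize_eqp _)).
have [-> | b_neq0] := eqVneq b 0; first by rewrite !mulr0 dvdp0.
have G_neq0 : gcdp a b != 0 by rewrite gcdp_eq0 negb_and b_neq0 orbT.
have co_ab' : coprimep (a %/ gcdp a b) (b %/ gcdp a b).
  by apply: coprimep_div_gcd; rewrite b_neq0 orbT.
rewrite -divp_mulAC ?dvdp_gcdl // dvdp_mul2r // -(Gauss_dvdpl k co_ab').
by rewrite -(dvdp_mul2r _ _ G_neq0) divpK ?dvdp_gcdl // -mulrA divpK ?dvdp_gcdr.
Qed.

Lemma dvdp_mlcm p a b : irreducible_poly p ->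
  (p %| mlcm a b) = (p %| a) || (p %| b).
Proof.
move=> irr_p; rewrite (eqp_dvdr _ (monicize_eqp _)).
rewrite -divp_mulAC ?dvdp_gcdl // irredp_dvd_mul //.
have [p_dvd_b | pNb] := boolP (p %| b); first by rewrite !orbT.
rewrite !orbF; apply/idP/idP => [/dvdp_trans -> // | p_dvd_a].
  by rewrite divp_dvd ?dvdp_gcdl.
have pNG : ~~ (p %| gcdp a b) by apply: contra pNb => /dvdp_trans->; rewrite ?dvdp_gcdr.
move: p_dvd_a; rewrite -{1}(divpK (dvdp_gcdl a b)) irredp_dvd_mul //.
by rewrite (negPf pNG) orbF.
Qed.
End MonicGcdLcm.

Section SquarefreeModulus.
Variables (F : fieldType) (N : {poly F}).
Hypothesis sepN : separable_poly N.
Implicit Types a b d p y : {poly F}.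

Lemma irredp_sq_ndvd p : irreducible_poly p -> ~~ (p * p %| N).
Proof.
by case=> p_gt1 _; rewrite -expr2 (separable_nosquare sepN) // neq_ltn p_gt1 orbT.
Qed.

Lemma dvdp_sqfree d y : d %| N ->
  (forall p, irreducible_poly p -> p %| d -> p %| y) -> d %| y.
Proof.
move=> d_dvd_N dvd_y; set G := gcdp d y; set e := d %/ G.
have d_eq : e * G = d by rewrite divpK ?dvdp_gcdl.
have d_neq0 : d != 0 := dvdpN0 d_dvd_N (separable_poly_neq0 sepN).
have [e_gt1 | e_le1] := ltnP 1 (size e).
  have [p irr_p p_dvd_e] := irredp_dvd_exists e_gt1.
  have p_dvd_d : p %| d by rewrite -d_eq dvdp_mulr.
  have p_dvd_G : p %| G by rewrite dvdp_gcd p_dvd_d dvd_y.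
  have := irredp_sq_ndvd irr_p.
  by rewrite (dvdp_trans _ d_dvd_N) // -d_eq dvdp_mul.
have e_eq1 : e %= 1.
  rewrite -size_poly_eq1 eqn_leq e_le1 size_poly_gt0.
  by apply: contraNneq d_neq0 => e0; rewrite -d_eq e0 mul0r.
by rewrite -d_eq (eqp_dvdl _ (eqp_mulr G e_eq1)) mul1r dvdp_gcdr.
Qed.

Lemma dvdp_divp_sqfree a d p : a %| N -> d %| a -> irreducible_poly p ->
  (p %| a %/ d) = (p %| a) && ~~ (p %| d).
Proof.
move=> a_dvd_N d_dvd_a irr_p; have a_eq : a %/ d * d = a by rewrite divpK.
apply/idP/andP => [p_dvd_q | [p_dvd_a pNd]].
  split; first by rewrite -a_eq dvdp_mulr.
  apply: contraNN (irredp_sq_ndvd irr_p) => p_dvd_d.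
  by rewrite (dvdp_trans _ a_dvd_N) // -a_eq dvdp_mul.
by move: p_dvd_a; rewrite -{1}a_eq irredp_dvd_mul // (negPf pNd) orbF.
Qed.

Lemma eq_monic_sqfree a b : a \is monic -> b \is monic -> a %| N -> b %| N ->
  (forall p, irreducible_poly p -> p %| N -> (p %| a) = (p %| b)) -> a = b.
Proof.
move=> a_monic b_monic a_dvd_N b_dvd_N same_irr.
apply/eqP; rewrite -eqp_monic // /eqp.
apply/andP; split; apply: dvdp_sqfree => // p irr_p p_dvd.
  by rewrite -same_irr // (dvdp_trans p_dvd).
by rewrite same_irr // (dvdp_trans p_dvd).
Qed.
End SquarefreeModulus.

Definition in_code (F : fieldType) (N a11 a12 a22 u v : {poly F}) : Prop :=
  exists a b, N %| u - a * a11 /\ N %| v - (a * a12 + b * a22).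

Definition mod_LCP (F : fieldType) (N : {poly F})
    (C D : {poly F} -> {poly F} -> Prop) : Prop :=
  (forall u v, C u v -> D u v -> N %| u /\ N %| v) /\
  (forall u v, exists u1 v1 u2 v2,
     [/\ C u1 v1, D u2 v2, N %| u - (u1 + u2) & N %| v - (v1 + v2)]).

Lemma mod_LCP_sym (F : fieldType) (N : {poly F}) C D : mod_LCP N C D -> mod_LCP N D C.
Proof.
move=> [meet sum]; split=> [u v Duv Cuv | u v]; first exact: meet.
have [u1 [v1 [u2 [v2 [Cuv1 Duv2 cong_u cong_v]]]]] := sum u v.
by exists u2, v2, u1, v1; rewrite [u2 + _]addrC [v2 + _]addrC.
Qed.

Lemma in_code_gen (F : fieldType) (N a11 a12 a22 a b : {poly F}) :
  in_code N a11 a12 a22 (a * a11) (a * a12 + b * a22).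
Proof. by exists a, b; rewrite !subrr dvdp0. Qed.

Section QuasiTwistedWords.
Variables (F : fieldType) (m : nat) (lam : F).
Hypothesis m_gt0 : (0 < m)%N.
Local Notation N := (xml m lam).
Implicit Types u v : {poly F}.

Definition qt_word u v : 'rV[F]_(2 * m) := qt_vec m (u %% N) (v %% N).

Lemma size_xml : size N = m.+1.
Proof. exact: size_XnsubC. Qed.

Lemma qt_vec_inj (c0 c1 d0 d1 : {poly F}) :
  (size c0 <= m)%N -> (size c1 <= m)%N -> (size d0 <= m)%N -> (size d1 <= m)%N ->
  qt_vec m c0 c1 = qt_vec m d0 d1 -> c0 = d0 /\ c1 = d1.
Proof.
move=> c0_le c1_le d0_le d1_le eq_cd.
have coef_eq i : (i < m)%N -> c0`_i = d0`_i /\ c1`_i = d1`_i.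
  move=> lt_i_m; have even_i : (i.*2 < 2 * m)%N by rewrite mul2n ltn_double.
  have odd_i : (i.*2.+1 < 2 * m)%N by rewrite mul2n ltn_Sdouble.
  have := congr1 (fun w : 'rV_(2 * m) => w 0 (Ordinal even_i)) eq_cd.
  have := congr1 (fun w : 'rV_(2 * m) => w 0 (Ordinal odd_i)) eq_cd.
  by rewrite !mxE /= odd_double uphalf_double doubleK => -> ->.
split; apply/polyP => i; have [/coef_eq[] // | le_m_i] := ltnP i m.
  by rewrite !nth_default // (leq_trans _ le_m_i).
by rewrite !nth_default // (leq_trans _ le_m_i).
Qed.

Lemma qt_wordD u v u' v' : qt_word (u + u') (v + v') = qt_word u v + qt_word u' v'.
Proof. by apply/rowP => i; rewrite !mxE !modpD; case: odd; rewrite coefD. Qed.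

Lemma qt_word_eq u v u' v' :
  qt_word u v = qt_word u' v' <-> N %| u - u' /\ N %| v - v'.
Proof.
rewrite /qt_word /dvdp !modpD !modpN !subr_eq0; split => [|[/eqP-> /eqP->] //].
have size_mod (w : {poly F}) : (size (w %% N)%R <= m)%N.
  by rewrite -ltnS -size_xml ltn_modp -size_poly_gt0 size_xml.
by move/qt_vec_inj => /(_ (size_mod _) (size_mod _) (size_mod _) (size_mod _)) [-> ->].
Qed.

Lemma qt_word0 : qt_word 0 0 = 0.
Proof. by apply/rowP => i; rewrite !mxE mod0p; case: odd; rewrite coef0. Qed.

Lemma qt_word_surj (w : 'rV[F]_(2 * m)) : exists u v, w = qt_word u v.
Proof.
pose c k := nth 0 [seq w 0 j | j <- enum 'I_(2 * m)] k.
have c_w (j : 'I_(2 * m)) : c j = w 0 j.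
  by rewrite /c (nth_map j) ?size_enum_ord // nth_ord_enum.
exists (\poly_(i < m) c i.*2), (\poly_(i < m) c i.*2.+1); apply/rowP => j.
have lt_j2_m : (j./2 < m)%N by rewrite -divn2 ltn_divLR // muln2 -mul2n ltn_ord.
rewrite !mxE -c_w -{1}(odd_double_half j).
by case: odd; rewrite modp_small ?size_xml ?ltnS ?size_poly // coef_poly lt_j2_m.
Qed.

Lemma qt_code_word a11 a12 a22 u v :
  qt_code m lam a11 a12 a22 (qt_word u v) <-> in_code N a11 a12 a22 u v.
Proof.
by split=> [[a [b /qt_word_eq[]]] | [a [b [? ?]]]]; exists a, b => //; apply/qt_word_eq.
Qed.

Lemma LCP_qt_code g11 g12 g22 f11 f12 f22 :
  LCP (qt_code m lam g11 g12 g22) (qt_code m lam f11 f12 f22) <->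
  mod_LCP N (in_code N g11 g12 g22) (in_code N f11 f12 f22).
Proof.
have word_eq0 u v : qt_word u v = 0 <-> N %| u /\ N %| v.
  by rewrite -qt_word0 qt_word_eq !subr0.
split=> [[meet sum] | [meet sum]]; split.
- move=> u v /qt_code_word Cuv /qt_code_word Duv; exact/word_eq0/meet.
- move=> u v; have [c [d [Cc [Dd uv_eq]]]] := sum (qt_word u v).
  have [u1 [v1 c_eq]] := qt_word_surj c; have [u2 [v2 d_eq]] := qt_word_surj d.
  have [cong_u cong_v] : N %| u - (u1 + u2) /\ N %| v - (v1 + v2).
    by apply/qt_word_eq; rewrite qt_wordD -c_eq -d_eq.
  by exists u1, v1, u2, v2; split => //; apply/qt_code_word; rewrite -?c_eq -?d_eq.
- move=> w; have [u [v ->]] := qt_word_surj w.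
  by move=> /qt_code_word Cuv /qt_code_word Duv; apply/word_eq0/meet.
move=> w; have [u [v ->]] := qt_word_surj w.
have [u1 [v1 [u2 [v2 [Cuv1 Duv2 cong_u cong_v]]]]] := sum u v.
exists (qt_word u1 v1), (qt_word u2 v2).
split; [exact/qt_code_word | split; first exact/qt_code_word].
by rewrite -qt_wordD; apply/qt_word_eq.
Qed.
End QuasiTwistedWords.

(* The reductions of C and D modulo p are complementary subspaces of the
   plane over F[x]/(p). *)
Definition local_LCP (F : fieldType) (g11 g12 g22 f11 f12 f22 p : {poly F}) :=
  [/\ ~~ ((p %| g11) && (p %| f11)),
      (p %| g11) && (p %| g22) = ~~ (p %| f11) && ~~ (p %| f22),
      (p %| f11) && (p %| f22) = ~~ (p %| g11) && ~~ (p %| g22) &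
      [&& p %| g22, p %| f22, ~~ (p %| g11) & ~~ (p %| f11)] ==>
        ~~ (p %| g11 * f12 - g12 * f11)].

Section LocalAnalysis.
Variables (F : fieldType) (N p : {poly F}).
Hypotheses (sepN : separable_poly N) (irr_p : irreducible_poly p) (p_dvd_N : p %| N).
Implicit Types a b u v w x y : {poly F}.

Let dvdN w : N %| w -> p %| w. Proof. exact: dvdp_trans. Qed.

Let N_eq : N %/ p * p = N. Proof. exact: divpK. Qed.
Let p_neq0 : p != 0. Proof. exact: irredp_neq0. Qed.

Lemma dvdp_cofactor w : (N %| N %/ p * w) = (p %| w).
Proof.
have M_neq0 : N %/ p != 0.
  by apply: contraNneq (separable_poly_neq0 sepN) => M0; rewrite -N_eq M0 mul0r.
by rewrite -{1}N_eq dvdp_mul2l.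
Qed.

Section OneCode.
Variables x11 x12 x22 : {poly F}.
Local Notation C := (in_code N x11 x12 x22).

Lemma dvdp_offdiag : x11 * x22 %| N * x12 -> p %| x11 -> p %| x22 -> p %| x12.
Proof.
move=> x_dvd p11 p22.
have : p * p %| N %/ p * x12 * p.
  by rewrite mulrAC N_eq (dvdp_trans _ x_dvd) // dvdp_mul.
rewrite dvdp_mul2r // irredp_dvd_mul // => /orP[p_dvd_M | //].
by have := irredp_sq_ndvd sepN irr_p; rewrite -N_eq dvdp_mul2r // p_dvd_M.
Qed.

Lemma in_code_dvd1 u v : C u v -> p %| x11 -> p %| u.
Proof.
by move=> [a [b [cong_u _]]] p11; rewrite (dvdp_congr (dvdN cong_u)) dvdp_mull.
Qed.

Lemma in_code_minor u v : C u v -> p %| x22 -> p %| x12 * u - x11 * v.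
Proof.
move=> [a [b [cong_u cong_v]]] p22.
have -> : x12 * u - x11 * v =
  x12 * (u - a * x11) - x11 * (v - (a * x12 + b * x22)) - x11 * b * x22 by ring.
by rewrite !dvdp_sub ?dvdp_mull ?p22 ?dvdN.
Qed.

Lemma in_code_dvd2 u v : C u v -> p %| u -> ~~ (p %| x11) -> p %| x22 -> p %| v.
Proof.
move=> Cuv pu pN11 /(in_code_minor Cuv).
by rewrite dvdp_addr ?dvdp_mull // dvdpNr irredp_dvd_mul // (negPf pN11).
Qed.

Lemma in_code_dvd u v : x11 * x22 %| N * x12 ->
  C u v -> p %| x11 -> p %| x22 -> p %| u /\ p %| v.
Proof.
move=> x_dvd Cuv p11 p22; split; first exact: in_code_dvd1 Cuv p11.
case: Cuv => [a [b [_ cong_v]]]; rewrite (dvdp_congr (dvdN cong_v)).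
by rewrite dvdp_add ?dvdp_mull ?dvdp_offdiag.
Qed.

Lemma in_code_cofactor x y : ~~ (p %| x11) -> ~~ (p %| x22) ->
  C (N %/ p * x) (N %/ p * y).
Proof.
rewrite -!irreducible_poly_coprime // => /Bezout_eq1_coprimepP[[r1 s1] /= e1].
move=> /Bezout_eq1_coprimepP[[r2 s2] /= e2]; set M := N %/ p.
have cancel_mod k r s q : r * p + s * q = 1 -> N %| M * k - M * k * s * q.
  move=> e; have -> : M * k - M * k * s * q = M * (k * r * p).
    by rewrite -{1}[M * k]mulr1 -e; ring.
  by rewrite mulrA mulrAC N_eq dvdp_mulIl.
exists (M * x * s1), (M * (y - x * s1 * x12) * s2); split; first exact: cancel_mod e1.
have -> : M * y - (M * x * s1 * x12 + M * (y - x * s1 * x12) * s2 * x22) =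
  M * (y - x * s1 * x12) - M * (y - x * s1 * x12) * s2 * x22 by ring.
exact: cancel_mod e2.
Qed.
End OneCode.

Section TwoCodes.
Variables g11 g12 g22 f11 f12 f22 : {poly F}.
Local Notation C := (in_code N g11 g12 g22).
Local Notation D := (in_code N f11 f12 f22).
Local Notation det := (g11 * f12 - g12 * f11).

Lemma in_code_meet_det u v : C u v -> D u v -> p %| g22 -> p %| f22 ->
  ~~ (p %| det) -> p %| u /\ p %| v.
Proof.
move=> Cuv Duv p22 q22 pNdet.
have minC := in_code_minor Cuv p22; have minD := in_code_minor Duv q22.
have det_u : det * u = g11 * (f12 * u - f11 * v) - f11 * (g12 * u - g11 * v) by ring.
have det_v : det * v = g12 * (f12 * u - f11 * v) - f12 * (g12 * u - g11 * v) by ring.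
have : p %| det * u by rewrite det_u dvdp_sub ?dvdp_mull.
have : p %| det * v by rewrite det_v dvdp_sub ?dvdp_mull.
by rewrite !irredp_dvd_mul // (negPf pNdet).
Qed.

Section FromModLCP.
Hypothesis LCP_CD : mod_LCP N C D.

Lemma mod_LCP_ndvd11 : ~~ ((p %| g11) && (p %| f11)).
Proof.
apply/andP => -[p11 q11]; have [u1 [v1 [u2 [v2 [Cuv1 Duv2 cong_u _]]]]] := LCP_CD.2 1 0.
have := irredp_ndvd1 irr_p; rewrite (dvdp_congr (dvdN cong_u)) dvdp_add //.
  exact: in_code_dvd1 Cuv1 p11.
exact: in_code_dvd1 Duv2 q11.
Qed.

Lemma mod_LCP_ndvd22 : g11 * g22 %| N * g12 -> p %| g11 -> p %| g22 -> ~~ (p %| f22).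
Proof.
move=> g_dvd p11 p22; apply/negP => q22.
(* C vanishes modulo p, so D contains (0, 1) modulo p, which forces p | f11. *)
have [u1 [v1 [u2 [v2 [Cuv1 Duv2 cong_u cong_v]]]]] := LCP_CD.2 0 1.
have [pu1 pv1] := in_code_dvd g_dvd Cuv1 p11 p22.
have pu2 : p %| u2.
  have -> : u2 = - (0 - (u1 + u2)) - u1 by ring.
  by rewrite dvdp_sub ?dvdpNr ?(dvdN cong_u).
have pv2 : p %| 1 - v2.
  have -> : 1 - v2 = (1 - (v1 + v2)) + v1 by ring.
  by rewrite dvdp_add ?(dvdN cong_v).
have pv2f : p %| f11 * v2.
  by have := in_code_minor Duv2 q22; rewrite (dvdp_addr _ (dvdp_mull f12 pu2)) dvdpNr.
have q11 : p %| f11.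
  have -> : f11 = f11 * v2 + f11 * (1 - v2) by ring.
  by rewrite dvdp_add ?(dvdp_mull f11 pv2).
by have := mod_LCP_ndvd11; rewrite p11 q11.
Qed.

Lemma mod_LCP_dvd_diag : ~~ (p %| f11) -> ~~ (p %| f22) -> (p %| g11) && (p %| g22).
Proof.
move=> qN11 qN22; set M := N %/ p.
(* D contains all of M * F[x]^2, in particular M times the generators of C. *)
have D_el x y : D (M * x) (M * y) := in_code_cofactor _ x y qN11 qN22.
have C_el1 : C (M * g11) (M * g12).
  by have := in_code_gen N g11 g12 g22 M 0; rewrite mul0r addr0.
have C_el2 : C (M * 0) (M * g22).
  by have := in_code_gen N g11 g12 g22 0 M; rewrite mulr0 !mul0r add0r.
rewrite -!dvdp_cofactor (LCP_CD.1 _ _ C_el1 (D_el _ _)).1.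
exact: (LCP_CD.1 _ _ C_el2 (D_el _ _)).2.
Qed.

Lemma mod_LCP_det : p %| det -> (p %| g11) || (p %| f11).
Proof.
move=> p_det; set M := N %/ p.
(* M f11 (g11, g12) lies in C, and in D since it is
   M g11 (f11, f12) + (0, - M det) with N | M det. *)
have C_el : C (M * f11 * g11) (M * f11 * g12).
  by have := in_code_gen N g11 g12 g22 (M * f11) 0; rewrite mul0r addr0.
have D_el : D (M * f11 * g11) (M * f11 * g12).
  exists (M * g11), 0; split; first by rewrite mulrAC subrr dvdp0.
  have -> : M * f11 * g12 - (M * g11 * f12 + 0 * f22) = - (M * det) by ring.
  by rewrite dvdpNr dvdp_cofactor.
have [+ _] := LCP_CD.1 _ _ C_el D_el.
by rewrite -mulrA dvdp_cofactor irredp_dvd_mul // orbC.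
Qed.

Lemma mod_LCP_zero_full : g11 * g22 %| N * g12 ->
  (p %| g11) && (p %| g22) = ~~ (p %| f11) && ~~ (p %| f22).
Proof.
move=> g_dvd; apply/idP/idP => [/andP[p11 p22] | /andP[]]; last exact: mod_LCP_dvd_diag.
have qN11 : ~~ (p %| f11) by apply: contraNN mod_LCP_ndvd11; rewrite p11.
by rewrite qN11 mod_LCP_ndvd22.
Qed.
End FromModLCP.

Lemma in_code_meet_local u v : g11 * g22 %| N * g12 -> f11 * f22 %| N * f12 ->
  local_LCP g11 g12 g22 f11 f12 f22 p -> C u v -> D u v -> p %| u /\ p %| v.
Proof.
move=> g_dvd f_dvd [l1 l2 l3 l4] Cuv Duv.
have [p11 | pN11] := boolP (p %| g11).
  have [p22 | pN22] := boolP (p %| g22); first exact: in_code_dvd g_dvd Cuv p11 p22.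
  have qN11 : ~~ (p %| f11) by move: l1; rewrite p11.
  have q22 : p %| f22 by move: l2; rewrite p11 (negPf pN22) qN11 /= => /esym/negbFE.
  have pu := in_code_dvd1 Cuv p11.
  by split; last exact: in_code_dvd2 Duv pu qN11 q22.
have [q11 | qN11] := boolP (p %| f11).
  have [q22 | qN22] := boolP (p %| f22); first exact: in_code_dvd f_dvd Duv q11 q22.
  have p22 : p %| g22 by move: l3; rewrite q11 (negPf qN22) pN11 /= => /esym/negbFE.
  have pu := in_code_dvd1 Duv q11.
  by split; last exact: in_code_dvd2 Cuv pu pN11 p22.
have q22 : p %| f22 by move: l2; rewrite (negPf pN11) qN11 /= => /esym/negbFE.
have p22 : p %| g22 by move: l3; rewrite (negPf qN11) pN11 /= => /esym/negbFE.
have pNdet : ~~ (p %| det) by move: l4; rewrite p22 q22 pN11 qN11.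
exact: in_code_meet_det Cuv Duv p22 q22 pNdet.
Qed.
End TwoCodes.

Lemma local_of_mod_LCP g11 g12 g22 f11 f12 f22 :
  g11 * g22 %| N * g12 -> f11 * f22 %| N * f12 ->
  mod_LCP N (in_code N g11 g12 g22) (in_code N f11 f12 f22) ->
  local_LCP g11 g12 g22 f11 f12 f22 p.
Proof.
move=> g_dvd f_dvd LCP_CD; have LCP_DC := mod_LCP_sym LCP_CD.
split; [exact: mod_LCP_ndvd11 LCP_CD | exact: mod_LCP_zero_full LCP_CD g_dvd
       | exact: mod_LCP_zero_full LCP_DC f_dvd |].
apply/implyP => /and4P[_ _ pN11 qN11]; apply/negP => /(mod_LCP_det LCP_CD).
by rewrite (negPf pN11) (negPf qN11).
Qed.
End LocalAnalysis.

Section LocalGlobal.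
Variables (F : fieldType) (N g11 g12 g22 f11 f12 f22 : {poly F}).
Hypothesis sepN : separable_poly N.
Hypotheses (g11_dvd : g11 %| N) (g22_dvd : g22 %| N).
Hypotheses (g_dvd : g11 * g22 %| N * g12) (f_dvd : f11 * f22 %| N * f12).
Local Notation C := (in_code N g11 g12 g22).
Local Notation D := (in_code N f11 f12 f22).
Local Notation det := (g11 * f12 - g12 * f11).

Let N_neq0 : N != 0. Proof. exact: separable_poly_neq0. Qed.

Section FromLocal.
Hypothesis local :
  forall p, irreducible_poly p -> p %| N -> local_LCP g11 g12 g22 f11 f12 f22 p.

Lemma local_coprime11 : coprimep g11 f11.
Proof.
apply/coprimep_irredP => [|p irr_p p11]; first exact: dvdpN0 g11_dvd N_neq0.
by have [l1 _ _ _] := local irr_p (dvdp_trans p11 g11_dvd); move: l1; rewrite p11.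
Qed.

Lemma local_coprime_det : coprimep (gcdp g22 f22) det.
Proof.
apply/coprimep_irredP => [|p irr_p].
  by rewrite gcdp_eq0 negb_and (dvdpN0 g22_dvd).
rewrite dvdp_gcd => /andP[p22 q22].
have [_ l2 l3 l4] := local irr_p (dvdp_trans p22 g22_dvd).
have pN11 : ~~ (p %| g11) by move: l2; rewrite p22 q22 andbT andbF => ->.
have qN11 : ~~ (p %| f11) by move: l3; rewrite p22 q22 andbT andbF => ->.
by move: l4; rewrite p22 q22 pN11 qN11.
Qed.

Lemma mod_LCP_meet_of_local u v : C u v -> D u v -> N %| u /\ N %| v.
Proof.
move=> Cuv Duv.
have loc_dvd p : irreducible_poly p -> p %| N -> p %| u /\ p %| v.
  move=> irr_p p_dvd_N; have loc_p := local irr_p p_dvd_N.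
  exact: (in_code_meet_local sepN irr_p p_dvd_N g_dvd f_dvd loc_p Cuv Duv).
by split; apply: dvdp_sqfree (dvdpp N) _ => // p irr_p /(loc_dvd p irr_p) [].
Qed.

Lemma mod_LCP_sum_of_local u v : exists u1 v1 u2 v2,
  [/\ C u1 v1, D u2 v2, N %| u - (u1 + u2) & N %| v - (v1 + v2)].
Proof.
have [[s t] /= st_eq] := Bezout_eq1_coprimepP _ _ local_coprime11.
have [[x y] /= xy_eq] := Bezoutp g22 f22.
have co_det : coprimep (x * g22 + y * f22) det.
  by rewrite (eqp_coprimepl _ xy_eq) local_coprime_det.
have [[r k] /= rk_eq] := Bezout_eq1_coprimepP _ _ co_det.
(* Split u with s g11 + t f11 = 1; the error W left in the second coordinate
   is split with r (x g22 + y f22) + k det = 1, the det part being realised by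
   (- f11, g11) k W, which adds nothing to the first coordinate. *)
pose W := v - u * (s * g12 + t * f12).
pose aC := u * s - W * f11 * k; pose aD := u * t + W * g11 * k.
exists (aC * g11), (aC * g12 + W * r * x * g22).
exists (aD * f11), (aD * f12 + W * r * y * f22).
split; try exact: in_code_gen.
  have -> : u - (aC * g11 + aD * f11) = u * (1 - (s * g11 + t * f11)).
    by rewrite /aC /aD; ring.
  by rewrite st_eq subrr mulr0 dvdp0.
have -> : v - (aC * g12 + W * r * x * g22 + (aD * f12 + W * r * y * f22)) =
    W * (1 - (r * (x * g22 + y * f22) + k * det)).
  by rewrite /aC /aD /W; ring.
by rewrite rk_eq subrr mulr0 dvdp0.
Qed.
End FromLocal.

Lemma mod_LCP_localP : mod_LCP N C D <->
  (forall p, irreducible_poly p -> p %| N -> local_LCP g11 g12 g22 f11 f12 f22 p).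
Proof.
split=> [LCP_CD p irr_p p_dvd_N | local].
  exact: (local_of_mod_LCP sepN irr_p p_dvd_N g_dvd f_dvd LCP_CD).
by split; [exact: mod_LCP_meet_of_local | exact: mod_LCP_sum_of_local].
Qed.
End LocalGlobal.

Section Conditions.
Variables (F : fieldType) (N : {poly F}).
Hypothesis sepN : separable_poly N.
Implicit Types a b c d : {poly F}.

Let N_neq0 : N != 0. Proof. exact: separable_poly_neq0. Qed.

Lemma mgcd_eq1_local a b : a %| N ->
  mgcd a b = 1 <->
  (forall p, irreducible_poly p -> p %| N -> ~~ ((p %| a) && (p %| b))).
Proof.
move=> a_dvd; rewrite mgcd_eq1 coprimep_irredP ?(dvdpN0 a_dvd) //.
split=> [co p irr_p _ | loc p irr_p p_dvd_a].
  by apply/andP => -[p_dvd_a]; apply/negP; exact: co.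
by have := loc p irr_p (dvdp_trans p_dvd_a a_dvd); rewrite p_dvd_a.
Qed.

Lemma mgcd_eq_divp_mlcm a b c d : N \is monic -> a %| N -> c %| N -> d %| N ->
  mgcd a b = N %/ mlcm c d <->
  (forall p, irreducible_poly p -> p %| N ->
     (p %| a) && (p %| b) = ~~ (p %| c) && ~~ (p %| d)).
Proof.
move=> N_monic a_dvd c_dvd d_dvd; set L := mlcm c d.
have L_dvd : L %| N by apply: mlcm_dvdp.
have L_monic : L \is monic.
  by apply: monicize_monic; rewrite -monicize_eq0 (dvdpN0 L_dvd).
have Q_monic : N %/ L \is monic by rewrite -(monicMr _ L_monic) divpK.
have G_monic : mgcd a b \is monic.
  by apply: monicize_monic; rewrite gcdp_eq0 negb_and (dvdpN0 a_dvd).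
have dvdp_Q p : irreducible_poly p -> p %| N ->
    (p %| N %/ L) = ~~ (p %| c) && ~~ (p %| d).
  move=> irr_p p_dvd_N.
  by rewrite (dvdp_divp_sqfree sepN) // p_dvd_N dvdp_mlcm // negb_or.
split=> [G_eq p irr_p p_dvd_N | loc]; first by rewrite -dvdp_mgcd G_eq dvdp_Q.
apply: (eq_monic_sqfree sepN) => //.
- exact: dvdp_trans (mgcd_dvdl a b) a_dvd.
- exact: divp_dvd.
by move=> p irr_p p_dvd_N; rewrite dvdp_mgcd loc // dvdp_Q.
Qed.

Lemma dvdp_divp_mgcd a b p : b %| N -> irreducible_poly p ->
  (p %| b %/ mgcd a b) = (p %| b) && ~~ (p %| a).
Proof.
move=> b_dvd irr_p; rewrite (dvdp_divp_sqfree sepN) ?mgcd_dvdr // dvdp_mgcd.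
by case: (p %| b); rewrite ?andbT.
Qed.

Lemma mgcd_divp_eq1_local a b c d e : b %| N -> d %| N ->
  mgcd (mgcd (b %/ mgcd a b) (d %/ mgcd c d)) e = 1 <->
  (forall p, irreducible_poly p -> p %| N ->
     [&& p %| b, p %| d, ~~ (p %| a) & ~~ (p %| c)] ==> ~~ (p %| e)).
Proof.
move=> b_dvd d_dvd.
have quot_neq0 : b %/ mgcd a b != 0.
  have : b %/ mgcd a b * mgcd a b != 0 by rewrite divpK ?mgcd_dvdr ?(dvdpN0 b_dvd).
  by rewrite mulf_eq0 negb_or => /andP[].
rewrite mgcd_eq1 coprimep_irredP; last first.
  by rewrite monicize_eq0 gcdp_eq0 negb_and quot_neq0.
split=> [co p irr_p p_dvd_N | loc p irr_p].
  apply/implyP => /and4P[p_b p_d pNa pNc]; apply: co => //.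
  by rewrite !dvdp_mgcd !dvdp_divp_mgcd // p_b p_d pNa pNc.
rewrite !dvdp_mgcd !dvdp_divp_mgcd // => /andP[/andP[p_b pNa] /andP[p_d pNc]].
by have := loc p irr_p (dvdp_trans p_b b_dvd); rewrite p_b p_d pNa pNc.
Qed.
End Conditions.

Theorem theorem5p3 (F : finFieldType) (m : nat) (lam : F)
  (g11 g12 g22 f11 f12 f22 : {poly F}) :
  (0 < m)%N -> coprime m #|F| -> lam != 0 ->
  g11 %| xml m lam -> g22 %| xml m lam -> (size g12 < size g22)%N ->
  (g11 * g22) %| (xml m lam * g12) ->
  f11 %| xml m lam -> f22 %| xml m lam -> (size f12 < size f22)%N ->
  (f11 * f22) %| (xml m lam * f12) ->
  let g := mgcd g11 g22 in
  let f := mgcd f11 f22 in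
  let g22' := g22 %/ g in
  let f22' := f22 %/ f in
  LCP (qt_code m lam g11 g12 g22) (qt_code m lam f11 f12 f22) <->
  [/\ mgcd f11 g11 = 1,
      g = xml m lam %/ mlcm f11 f22,
      f = xml m lam %/ mlcm g11 g22 &
      mgcd (mgcd g22' f22') (g11 * f12 - g12 * f11) = 1].
Proof.
move=> m_gt0 co_mF lam0 g11_dvd g22_dvd _ g_dvd f11_dvd f22_dvd _ f_dvd g f g22' f22'.
have sepN : separable_poly (xml m lam).
  exact: separable_XnsubC (natr_neq0_coprime_card co_mF) lam0.
have N_monic : xml m lam \is monic := monicXnsubC lam m_gt0.
have cond1 := mgcd_eq1_local sepN g11 f11_dvd.
have cond2 := mgcd_eq_divp_mlcm sepN g22 N_monic g11_dvd f11_dvd f22_dvd.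
have cond3 := mgcd_eq_divp_mlcm sepN f22 N_monic f11_dvd g11_dvd g22_dvd.
have cond4 := mgcd_divp_eq1_local sepN g11 f11 (g11 * f12 - g12 * f11) g22_dvd f22_dvd.
rewrite LCP_qt_code // (mod_LCP_localP sepN g11_dvd g22_dvd g_dvd f_dvd).
split=> [loc | [c1 c2 c3 c4] p irr_p p_dvd_N].
  split; [apply/cond1 | apply/cond2 | apply/cond3 | apply/cond4] => p irr_p p_dvd_N;
    have [l1 l2 l3 l4] := loc p irr_p p_dvd_N => //.
  by rewrite andbC.
split; [rewrite andbC; exact: (proj1 cond1 c1) | exact: (proj1 cond2 c2)
       | exact: (proj1 cond3 c3) | exact: (proj1 cond4 c4)].
Qed.
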